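(* Let $q$ be a prime power, $t\ge1$, $s<t$ a nonnegative integer, and $W=\{0,w_1,\dots,w_{q^s-1}\}$ an $\mathbb{F}_q$-subspace of $\mathbb{F}_{q^t}$ of dimension $s$. Let $A\subseteq\mathbb{F}_{q^t}$, $\alpha^*\in A$, let $\{\beta_1,\dots,\beta_t\}$ be an arbitrary $\mathbb{F}_q$-basis of $\mathbb{F}_{q^t}$, and for $i=1,\dots,t$ let \[ g_i(x)=\beta_i\prod_{j=1}^{q^s-1}\Big(x-\big(\alpha^*-w_j^{-1}\beta_i\big)\Big). \] Then for every $\alpha\in A\setminus\{\alpha^*\}$, the set $\{g_1(\alpha),\dots,g_t(\alpha)\}$ has rank at most $t-s$ over $\mathbb{F}_q$. *)

From HB Require Import structures.
From mathcomp Require Import all_boot all_order all_algebra all_field.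
Set Implicit Arguments. Unset Strict Implicit. Unset Printing Implicit Defensive.
Import GRing.Theory.
Local Open Scope ring_scope.

(* g_i(x) = beta_i * prod_{j=1}^{q^s-1} (x - (astar - w_j^{-1} beta_i)),
   where ws = [w_1; ...; w_{q^s-1}] enumerates the nonzero elements of W. *)
Definition gfun (F : fieldType) (L : fieldExtType F) (ws : seq L)
  (astar b x : L) : L :=
  b * \prod_(w <- ws) (x - (astar - w^-1 * b)).

From HB Require Import structures.
From mathcomp Require Import all_boot all_order all_algebra all_field.
From mathcomp Require Import ring zify.
Set Implicit Arguments. Unset Strict Implicit. Unset Printing Implicit Defensive.
Import GRing.Theory.
Local Open Scope ring_scope.

(** With [g = alpha - astar] and [u_i = beta_i / g], factoring
    [g + w^-1 beta_i = w^-1 g (u_i + w)] gives [g_i(alpha) = K * L_W(u_i)] for a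
    constant [K], where [L_W(x) = prod_(w in W) (x - w)] is the subspace
    polynomial of [W]. The map [L_W] is [F]-linear and vanishes on [W], so all
    [g_i(alpha)] lie in an image of dimension at most [t - s].
    Additivity: for fixed [y], [L_W(x + y) - L_W(x) - L_W(y)] has degree less
    than [|W|] in [x] and vanishes on [W]. Homogeneity: a nonzero scalar [a]
    permutes [W] and [W \ 0], so [L_W(a x) = a^|W| L_W(x)] and
    [a^(|W|-1) = 1] (compare the products of the nonzero elements). *)

Lemma reindex_seq_inj (R : Type) (idx : R) (op : Monoid.com_law idx)
    (T : eqType) (s : seq T) (h : T -> T) (G : T -> R) :
  uniq s -> injective h -> {in s, forall x, h x \in s} ->
  \big[op/idx]_(x <- s) G (h x) = \big[op/idx]_(x <- s) G x.
Proof.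
move=> s_uniq h_inj h_s; rewrite -(big_map h xpredT); apply: perm_big.
have hs_uniq : uniq (map h s) by rewrite map_inj_uniq.
have hs_sub : {subset map h s <= s} by move=> _ /mapP[x xs ->]; apply: h_s.
have [_ eq_mem] := uniq_min_size hs_uniq hs_sub (eq_leq (esym (size_map h s))).
exact: uniq_perm.
Qed.

Lemma prodr_const_seq (R : pzSemiRingType) (I : Type) (r : seq I) (x : R) :
  \prod_(i <- r) x = x ^+ size r.
Proof. by elim: r => [|i r IH]; rewrite ?big_nil ?big_cons ?IH ?exprS. Qed.

Lemma size_monicB_lt (R : nzRingType) (p q : {poly R}) :
  p \is monic -> q \is monic -> size p = size q -> (size (p - q)%R < size p)%N.
Proof.
move=> p_monic q_monic eq_size.
have le_sizeB : (size (p - q)%R <= size p)%N.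
  by rewrite (leq_trans (size_polyD _ _)) // size_polyN -eq_size maxnn.
rewrite ltn_neqAle le_sizeB andbT; apply/eqP => eq_sizeB.
have pq0 : p - q = 0.
  apply/eqP; rewrite -lead_coef_eq0 lead_coefE coefB eq_sizeB {2}eq_size.
  by rewrite -!lead_coefE (monicP p_monic) (monicP q_monic) subrr.
have := monic_neq0 p_monic.
by rewrite -size_poly_eq0 -eq_sizeB pq0 size_poly0.
Qed.

Lemma dim_span_map_lfun (K : fieldType) (V : vectType K) (f : 'End(V))
    (U : {vspace V}) (X : seq V) :
  (U <= lker f)%VS -> (\dim <<map f X>> <= \dim {:V} - \dim U)%N.
Proof.
move=> sub_ker.
have sub_img : (<<map f X>> <= limg f)%VS.
  by apply/span_subvP => _ /mapP[x _ ->]; rewrite memv_img ?memvf.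
have := limg_ker_dim f fullv; rewrite capfv.
by have := dimvS sub_img; have := dimvS sub_ker; lia.
Qed.

Section SubspaceMap.
Variables (F : fieldType) (L : fieldExtType F) (W : {vspace L}) (ws : seq L).
Hypothesis ws_uniq : uniq ws.
Hypothesis mem_ws : forall w, (w \in ws) = (w \in W) && (w != 0).

Lemma mem_enumW : 0 :: ws =i W.
Proof. by move=> w; rewrite inE mem_ws; case: eqP => [->|]; rewrite ?mem0v ?andbT. Qed.

Lemma enumW_uniq : uniq (0 :: ws).
Proof. by rewrite /= ws_uniq mem_ws eqxx andbF. Qed.

Lemma prod_reindexW (h G : L -> L) :
  injective h -> {in W, forall w, h w \in W} ->
  \prod_(w <- 0 :: ws) G (h w) = \prod_(w <- 0 :: ws) G w.
Proof.
move=> h_inj h_W; apply: reindex_seq_inj enumW_uniq h_inj _ => w.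
by rewrite !mem_enumW; apply: h_W.
Qed.

Definition subspace_map (u : L) : L := \prod_(w <- 0 :: ws) (u - w).

Lemma subspace_map_eq0 x : x \in W -> subspace_map x = 0.
Proof.
move=> xW; apply/eqP; rewrite prodf_seq_eq0; apply/hasP; exists x.
  by rewrite mem_enumW.
by rewrite subrr eqxx.
Qed.

Lemma subspace_map_translW x y : x \in W -> subspace_map (x + y) = subspace_map y.
Proof.
move=> xW; rewrite /subspace_map.
rewrite -(prod_reindexW (fun w => x + y - w) (addrI x)).
  by apply: eq_bigr => w _; rewrite opprD addrACA subrr add0r.
by move=> w wW; rewrite rpredD.
Qed.

Lemma subspace_mapD x y :
  subspace_map (x + y) = subspace_map x + subspace_map y.
Proof.
pose p_y := \prod_(w <- 0 :: ws) ('X - (w - y)%:P).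
pose p := \prod_(w <- 0 :: ws) ('X - w%:P).
pose d := p_y - p - (subspace_map y)%:P.
have d_eval z : d.[z] = subspace_map (z + y) - subspace_map z - subspace_map y.
  rewrite /d !hornerE !horner_prod /subspace_map.
  by congr (_ - _ - _); apply: eq_bigr => w _; rewrite !hornerE ?opprB ?addrA.
have size_d : (size d <= (size ws).+1)%N.
  have size_p_y : size p_y = (size ws).+2 by rewrite size_prod_XsubC.
  have size_p : size p = (size ws).+2 by rewrite size_prod_XsubC.
  have size_pB : (size (p_y - p)%R < (size ws).+2)%N.
    by rewrite -size_p_y size_monicB_lt ?monic_prod_XsubC ?size_p_y.
  rewrite -ltnS (leq_ltn_trans (size_polyD _ _)) // size_polyN size_polyC.
  by rewrite gtn_max size_pB (leq_ltn_trans (leq_b1 _)).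
have d_eq0 : d = 0.
  apply: contraTeq size_d => d_neq0; rewrite -ltnNge.
  apply: max_poly_roots d_neq0 _ enumW_uniq.
  apply/allP => z; rewrite mem_enumW => zW.
  by rewrite /root d_eval subspace_map_translW // (subspace_map_eq0 zW) subr0 subrr.
by apply/eqP; rewrite -subr_eq0 opprD addrA -d_eval d_eq0 horner0.
Qed.

Lemma expr_size_ws (a : F) : a != 0 -> a ^+ size ws = 1.
Proof.
move=> a_neq0.
have prod_neq0 : \prod_(w <- ws) w != 0.
  by rewrite prodf_seq_neq0; apply/allP => w; rewrite mem_ws => /andP[].
have : \prod_(w <- ws) (a *: w) = \prod_(w <- ws) w.
  apply: reindex_seq_inj ws_uniq (scalerI a_neq0) _ => w.
  rewrite !mem_ws scaler_eq0 (negbTE a_neq0) => /andP[wW ->].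
  by rewrite rpredZ.
rewrite scaler_prod prodr_const_seq -{2}[\prod_(w <- ws) w]scale1r => /eqP.
rewrite -subr_eq0 -scalerBl scaler_eq0 (negbTE prod_neq0) orbF subr_eq0.
by move/eqP.
Qed.

Lemma subspace_mapZ (a : F) u : subspace_map (a *: u) = a *: subspace_map u.
Proof.
have [->|a_neq0] := eqVneq a 0.
  by rewrite !scale0r subspace_map_eq0 ?mem0v.
rewrite /subspace_map.
rewrite -(prod_reindexW (fun w => a *: u - w) (scalerI a_neq0)).
  under eq_bigr do rewrite -scalerBr.
  by rewrite scaler_prod prodr_const_seq /= exprS expr_size_ws ?mulr1.
by move=> w wW; rewrite rpredZ.
Qed.

Lemma subspace_map_is_linear : linear subspace_map.
Proof. by move=> a u v; rewrite subspace_mapD subspace_mapZ. Qed.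

Definition subspace_lmap : {linear L -> L} :=
  HB.pack subspace_map
    (GRing.isLinear.Build F L L *:%R subspace_map subspace_map_is_linear).

Lemma gfun_subspace_map astar b alpha : alpha != astar ->
  gfun ws astar b alpha =
    (alpha - astar) ^+ (size ws).+1 / \prod_(w <- ws) w
    * subspace_map (b / (alpha - astar)).
Proof.
move=> alpha_neq; set g := alpha - astar; set u := b / g.
have g_neq0 : g != 0 by rewrite subr_eq0.
have b_gu : b = g * u by rewrite /u mulrC divfK.
have factorE :
    {in ws, forall w, alpha - (astar - w^-1 * b) = w^-1 * (g * (u + w))}.
  by move=> w; rewrite mem_ws => /andP[_ w_neq0]; rewrite b_gu /g; field.
have symW : \prod_(w <- 0 :: ws) (u + w) = subspace_map u.
  by apply/esym/prod_reindexW => [|w wW]; [exact: oppr_inj | rewrite rpredN].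
rewrite /gfun (eq_big_seq _ factorE) !big_split /= prodfV prodr_const_seq.
rewrite -[subspace_map u]symW big_cons addr0 b_gu.
by rewrite exprS; ring.
Qed.

End SubspaceMap.

Theorem lemma6 (F : finFieldType) (L : fieldExtType F) (t s : nat)
  (ht : (1 <= t)%N) (hdim : \dim {:L} = t) (hs : (s < t)%N)
  (W : {vspace L}) (hW : \dim W = s)
  (ws : seq L) (hws_uniq : uniq ws)
  (hws : forall w : L, (w \in ws) = (w \in W) && (w != 0))
  (A : {pred L}) (astar : L) (hastar : astar \in A)
  (beta : t.-tuple L) (hbeta : basis_of fullv beta) :
  forall alpha : L, alpha \in A -> alpha != astar ->
    (\dim <<[seq gfun ws astar (tnth beta i) alpha | i : 'I_t]>>%VS <= t - s)%N.
Proof.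
move=> alpha _ alpha_neq.
set g := alpha - astar.
pose f := (amull (g ^+ (size ws).+1 / \prod_(w <- ws) w)
           \o linfun (subspace_lmap hws_uniq hws))%VF.
have gfunE i : gfun ws astar (tnth beta i) alpha = f (tnth beta i / g).
  by rewrite comp_lfunE !lfunE /= (gfun_subspace_map hws_uniq hws).
have -> : [seq gfun ws astar (tnth beta i) alpha | i : 'I_t] =
          map f [seq tnth beta i / g | i : 'I_t].
  by rewrite -map_comp; exact: eq_map gfunE _.
have W_ker : (W <= lker f)%VS.
  apply/subvP => w wW.
  by rewrite memv_ker comp_lfunE !lfunE /= (subspace_map_eq0 hws) ?mulr0.
have := dim_span_map_lfun [seq tnth beta i / g | i : 'I_t] W_ker.
by rewrite hdim hW.
Qed.
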